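(* Let $M$ be a simple-$\mathcal F$-torsion-free $R$-module. Then: (a) $M$ is a prime module; (b) $M$ is uniform; (c) $\mathrm{Ann}_R(M)\in\mathcal F^*$.
   Context: Throughout, $R$ is a commutative Noetherian local ring with maximal ideal $\mathfrak m$, and $\mathcal F$ is a Gabriel topology on $R$: a nonempty set of ideals of $R$ such that (1) if $\mathfrak a\in\mathcal F$ and $\mathfrak a\subseteq\mathfrak b$ then $\mathfrak b\in\mathcal F$; (2) if $\mathfrak a,\mathfrak b\in\mathcal F$ then $\mathfrak a\cap\mathfrak b\in\mathcal F$; (3) if $\mathfrak b$ is an ideal and there is $\mathfrak a\in\mathcal F$ with $(\mathfrak b:r)\in\mathcal F$ for all $r\in\mathfrak a$, then $\mathfrak b\in\mathcal F$. For an $R$-module $X$ and an ideal $\mathfrak a$ put $X[\mathfrak a]=\{x\in X:\mathfrak a x=0\}$. $X$ is $\mathcal F$-torsion-free if $X[\mathfrak a]=0$ for all $\mathfrak a\in\mathcal F$ (equivalently $\mathrm{Ass}(X)\cap\mathcal F=\emptyset$). $M$ is simple-$\mathcal F$-torsion-free if $M\neq 0$, $M$ is $\mathcal F$-torsion-free, and for every submodule $0\neq U\subsetneq M$ the module $M/U$ is not $\mathcal F$-torsion-free. $\mathcal F^*$ denotes the set of maximal elements (under inclusion) of $\mathrm{Spec}(R)\setminus\mathcal F$. A module $M\ne 0$ is prime if every $r\in R$ acts on $M$ either as zero or injectively (equivalently, $\mathrm{Ann}_R(M)=\mathrm{Ann}_R(U)$ for all nonzero submodules $U$). A module is uniform if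 it is nonzero and any two nonzero submodules intersect nontrivially. *)

From HB Require Import structures.
From mathcomp Require Import all_boot all_order all_algebra.
Set Implicit Arguments. Unset Strict Implicit. Unset Printing Implicit Defensive.
Import GRing.Theory.
Local Open Scope ring_scope.

Definition is_ideal (R : comNzRingType) (a : R -> Prop) : Prop :=
  [/\ a 0, (forall x y, a x -> a y -> a (x + y)) &
      (forall r x, a x -> a (r * x))].

Definition sub_pred (T : Type) (a b : T -> Prop) : Prop := forall x, a x -> b x.

Definition is_prime_ideal (R : comNzRingType) (p : R -> Prop) : Prop :=
  [/\ is_ideal p, ~ p 1 & (forall x y, p (x * y) -> p x \/ p y)].

Definition is_maximal_ideal (R : comNzRingType) (m : R -> Prop) : Prop :=
  [/\ is_ideal m, ~ m 1 &
      (forall b, is_ideal b -> sub_pred m b -> ~ b 1 -> sub_pred b m)].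

Definition local_ring (R : comNzRingType) : Prop :=
  exists m : R -> Prop, is_maximal_ideal m /\
    forall n, is_maximal_ideal n -> forall x, n x <-> m x.

Definition noetherian_ring (R : comNzRingType) : Prop :=
  forall I : nat -> (R -> Prop),
    (forall n, is_ideal (I n)) -> (forall n, sub_pred (I n) (I n.+1)) ->
    exists n, forall k, (n <= k)%N -> forall x, I k x <-> I n x.

Definition colon (R : comNzRingType) (b : R -> Prop) (r : R) : R -> Prop :=
  fun s => b (s * r).

Definition gabriel_topology (R : comNzRingType) (F : (R -> Prop) -> Prop) : Prop :=
  [/\ (forall a, F a -> is_ideal a),
      (exists a, F a),
      (forall a b, F a -> is_ideal b -> sub_pred a b -> F b),
      (forall a b, F a -> F b -> F (fun x => a x /\ b x)) &
      (forall b, is_ideal b ->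
         (exists a, F a /\ forall r, a r -> F (colon b r)) -> F b)].

Definition in_Fstar (R : comNzRingType) (F : (R -> Prop) -> Prop) (p : R -> Prop) : Prop :=
  [/\ is_prime_ideal p, ~ F p &
      (forall q, is_prime_ideal q -> ~ F q -> sub_pred p q -> sub_pred q p)].

Definition is_submodule (R : comNzRingType) (M : lmodType R) (U : M -> Prop) : Prop :=
  [/\ U 0, (forall x y, U x -> U y -> U (x + y)) &
      (forall (r : R) x, U x -> U (r *: x))].

Definition ann (R : comNzRingType) (M : lmodType R) : R -> Prop :=
  fun r => forall x : M, r *: x = 0.

Definition F_torsion_free (R : comNzRingType) (F : (R -> Prop) -> Prop)
    (M : lmodType R) : Prop :=
  forall a, F a -> forall x : M, (forall r, a r -> r *: x = 0) -> x = 0.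

(* The quotient M/U is F-torsion-free, written out on representatives:
   x + U lies in (M/U)[a] iff a x \subseteq U, and x + U = 0 iff x \in U. *)
Definition quotient_F_torsion_free (R : comNzRingType) (F : (R -> Prop) -> Prop)
    (M : lmodType R) (U : M -> Prop) : Prop :=
  forall a, F a -> forall x : M, (forall r, a r -> U (r *: x)) -> U x.

Definition simple_F_torsion_free (R : comNzRingType) (F : (R -> Prop) -> Prop)
    (M : lmodType R) : Prop :=
  [/\ exists x : M, x <> 0,
      F_torsion_free F M &
      forall U : M -> Prop, is_submodule U ->
        (exists x, U x /\ x <> 0) -> (exists y, ~ U y) ->
        ~ quotient_F_torsion_free F U].

Definition prime_module (R : comNzRingType) (M : lmodType R) : Prop :=
  (exists x : M, x <> 0) /\
  forall r : R, (forall x : M, r *: x = 0) \/ (forall x : M, r *: x = 0 -> x = 0).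

Definition uniform_module (R : comNzRingType) (M : lmodType R) : Prop :=
  (exists x : M, x <> 0) /\
  forall U V : M -> Prop, is_submodule U -> is_submodule V ->
    (exists x, U x /\ x <> 0) -> (exists y, V y /\ y <> 0) ->
    exists z, [/\ U z, V z & z <> 0].

From mathcomp Require Import all_boot all_order all_algebra.
From Stdlib Require Import Classical.
Set Implicit Arguments. Unset Strict Implicit. Unset Printing Implicit Defensive.
Import GRing.Theory.
Local Open Scope ring_scope.

(* The whole proof rests on one observation
   ([sftf_full]): a nonzero submodule U of M whose quotient M/U is
   F-torsion-free must be all of M.  Each part applies it to a suitable U.
   (a) For r in R the kernel U = {x | r x = 0} has M/U ~ rM <= M
       F-torsion-free, so r kills M or acts injectively: M is prime.
   (b) For a nonzero submodule U, its F-saturation {x | (U : x) in F} has an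
       F-torsion-free quotient by axiom (3) of a Gabriel topology, hence is
       M; so for y <> 0 the ideal (U : y) lies in F and, M being
       F-torsion-free, some r in it has r y <> 0 with r y in U: M is uniform.
   (c) Ann(M) is prime because M is prime, and not in F because M is
       F-torsion-free and nonzero.  If Ann(M) <= q with q prime, q not in F,
       and t in q acts injectively, the q-saturation {m | u m in R t x0 for
       some u not in q} has an F-torsion-free quotient (every ideal of F
       meets the complement of q), so it contains x0, giving u - r t in
       Ann(M) <= q with u not in q: impossible, hence q = Ann(M). *)

Definition conductor (R : comNzRingType) (M : lmodType R) (U : M -> Prop)
    (x : M) : R -> Prop :=
  fun t => U (t *: x).

Section IdealsAndSubmodules.
Variables (R : comNzRingType) (M : lmodType R).

Lemma scalerC (a b : R) (x : M) : a *: (b *: x) = b *: (a *: x).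
Proof. by rewrite !scalerA mulrC. Qed.

Lemma is_ideal_colon (b : R -> Prop) (r : R) :
  is_ideal b -> is_ideal (colon b r).
Proof.
move=> [b0 bD bM]; rewrite /colon; split.
- by rewrite mul0r.
- by move=> s t bs bt; rewrite mulrDl; apply: bD.
- by move=> s t bt; rewrite -mulrA; apply: bM.
Qed.

Lemma is_ideal_conductor (U : M -> Prop) (x : M) :
  is_submodule U -> is_ideal (conductor U x).
Proof.
move=> [U0 UD UZ]; rewrite /conductor; split.
- by rewrite scale0r.
- by move=> s t Us Ut; rewrite scalerDl; apply: UD.
- by move=> s t Ut; rewrite -scalerA; apply: UZ.
Qed.

Lemma is_ideal_ann : is_ideal (ann M).
Proof.
rewrite /ann; split.
- by move=> x; rewrite scale0r.
- by move=> a b Ha Hb x; rewrite scalerDl Ha Hb addr0.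
- by move=> r a Ha x; rewrite -scalerA Ha scaler0.
Qed.

Lemma is_submodule_kernel (r : R) : is_submodule (fun x : M => r *: x = 0).
Proof.
split.
- by rewrite scaler0.
- by move=> x y Hx Hy; rewrite scalerDr Hx Hy addr0.
- by move=> s x Hx; rewrite scalerC Hx scaler0.
Qed.

Lemma prime_module_ann (r : R) (x : M) :
  prime_module M -> x <> 0 -> r *: x = 0 -> ann M r.
Proof. by move=> [_ /(_ r) [] // inj] x0 /inj. Qed.

Lemma prime_module_ann_prime : prime_module M -> is_prime_ideal (ann M).
Proof.
move=> [[x0 x0_neq0] Hprime]; split; first exact: is_ideal_ann.
  by move=> H1; apply: x0_neq0; rewrite -(scale1r x0); apply: H1.
move=> a b Hab; case: (Hprime b) => Hb; first by right.
by left=> x; apply: Hb; rewrite scalerC scalerA; apply: Hab.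
Qed.

Definition prime_saturation (q : R -> Prop) (y : M) : M -> Prop :=
  fun m => exists2 u, ~ q u & exists r : R, u *: m = r *: y.

Lemma is_submodule_prime_saturation (q : R -> Prop) (y : M) :
  is_prime_ideal q -> is_submodule (prime_saturation q y).
Proof.
move=> [_ q1 qprime]; rewrite /prime_saturation; split.
- by exists 1 => //; exists 0; rewrite scaler0 scale0r.
- move=> x z [u1 u1q [r1 E1]] [u2 u2q [r2 E2]].
  exists (u1 * u2); first by case/qprime.
  exists (u2 * r1 + u1 * r2).
  by rewrite scalerDr scalerDl -!scalerA E2 (scalerC u1 u2) E1.
- move=> c x [u uq [r E]]; exists u => //; exists (c * r).
  by rewrite scalerC E scalerA mulrC.
Qed.

End IdealsAndSubmodules.

Section GabrielTopology.
Variables (R : comNzRingType) (F : (R -> Prop) -> Prop).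
Hypothesis HF : gabriel_topology F.

Lemma gabriel_full (b : R -> Prop) : is_ideal b -> (forall t, b t) -> F b.
Proof.
case: HF => _ [a Fa] Fup _ _ bid ball.
by apply: (Fup a) => // t _; apply: ball.
Qed.

Variable M : lmodType R.

Definition F_saturation (U : M -> Prop) : M -> Prop :=
  fun x => F (conductor U x).

Lemma F_saturation_sub (U : M -> Prop) x :
  is_submodule U -> U x -> F_saturation U x.
Proof.
move=> HU Ux; apply: gabriel_full; first exact: is_ideal_conductor.
by case: HU => _ _ UZ t; apply: UZ.
Qed.

Lemma is_submodule_F_saturation (U : M -> Prop) :
  is_submodule U -> is_submodule (F_saturation U).
Proof.
case: HF => _ _ Fup Fcap _ HU; have [U0 UD UZ] := HU.
rewrite /F_saturation; split.
- exact: F_saturation_sub.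
- move=> x z Fx Fz; apply: (Fup _ _ (Fcap _ _ Fx Fz)); first exact: is_ideal_conductor.
  by move=> t [Ux Uz]; rewrite /conductor scalerDr; apply: UD.
- move=> r x Fx; apply: (Fup _ _ Fx); first exact: is_ideal_conductor.
  move=> t Ut.
  by rewrite /conductor scalerC; apply: UZ.
Qed.

(* Axiom (3) says exactly that M / F_saturation U is F-torsion-free. *)
Lemma F_saturation_quotient_tf (U : M -> Prop) :
  is_submodule U -> quotient_F_torsion_free F (F_saturation U).
Proof.
case: HF => _ _ Fup _ Fcol HU a Fa x Hx.
apply: Fcol; first exact: is_ideal_conductor.
exists a; split => // r ar; apply: (Fup _ _ (Hx r ar)).
  exact/is_ideal_colon/is_ideal_conductor.
by move=> t Ut; rewrite /colon /conductor -scalerA.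
Qed.

Lemma prime_saturation_quotient_tf (q : R -> Prop) (y : M) :
  is_prime_ideal q -> ~ F q -> quotient_F_torsion_free F (prime_saturation q y).
Proof.
case: HF => _ _ Fup _ _ [qid _ qprime] Fq a Fa x Hx.
have [r ar rq] : exists2 r, a r & ~ q r.
  apply: NNPP => no_r; apply: Fq; apply: (Fup a) => // r ar.
  by apply: NNPP => rq; apply: no_r; exists r.
have [u uq [r' E]] := Hx r ar.
by exists (u * r); [case/qprime | exists r'; rewrite -scalerA].
Qed.

End GabrielTopology.

Section SimpleTorsionFree.
Variables (R : comNzRingType) (F : (R -> Prop) -> Prop) (M : lmodType R).
Hypotheses (HF : gabriel_topology F) (HM : simple_F_torsion_free F M).

Lemma sftf_full (U : M -> Prop) :
  is_submodule U -> (exists x, U x /\ x <> 0) ->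
  quotient_F_torsion_free F U -> forall y, U y.
Proof.
case: HM => _ _ Hsimple HU Unz Utf y; apply: NNPP => Uy.
by apply: (Hsimple U HU Unz _ Utf); exists y.
Qed.

(* (a) Since M/ker(r) embeds in M via r, the kernel is 0 or M. *)
Lemma sftf_prime : prime_module M.
Proof.
case: HM => Mnz Mtf _; split=> // r.
have Ktf : quotient_F_torsion_free F (fun x : M => r *: x = 0).
  move=> a Fa x Hx; apply: (Mtf a Fa) => s as_.
  by rewrite scalerC; apply: Hx.
case: (classic (exists x : M, r *: x = 0 /\ x <> 0)) => Knz.
  by left; apply: sftf_full => //; apply: is_submodule_kernel.
by right=> x rx; apply: NNPP => x_neq0; apply: Knz; exists x.
Qed.

(* (b) The F-saturation of a nonzero U is M, so (U : y) is in F. *)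
Lemma sftf_uniform : uniform_module M.
Proof.
case: HM => Mnz Mtf _; split=> // U V HU HV [x [Ux x_neq0]] [y [Vy y_neq0]].
have Fy : F_saturation F U y.
  apply: sftf_full; first exact: is_submodule_F_saturation.
    by exists x; split=> //; apply: F_saturation_sub.
  exact: F_saturation_quotient_tf.
have [r Ury ry_neq0] : exists2 r, U (r *: y) & r *: y <> 0.
  apply: NNPP => no_r; apply: y_neq0; apply: (Mtf _ Fy) => r Ury.
  by apply: NNPP => ry_neq0; apply: no_r; exists r.
by exists (r *: y); split=> //; case: HV => _ _; apply.
Qed.

Lemma sftf_ann_Fstar : in_Fstar F (ann M).
Proof.
have Mprime := sftf_prime; have [[x0 x0_neq0] Mtf _] := HM.
split; first exact: prime_module_ann_prime.
  by move=> Fann; apply: x0_neq0; apply: (Mtf _ Fann) => r; apply.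
move=> q qprime Fq ann_q t qt; apply: NNPP => t_ann.
have t_inj (x : M) : t *: x = 0 -> x = 0.
  by move=> tx; apply: NNPP => x_neq0; apply/t_ann/(prime_module_ann Mprime x_neq0).
have [u uq [r E]] : prime_saturation q (t *: x0) x0.
  apply: sftf_full; first exact: is_submodule_prime_saturation.
    exists (t *: x0); split; last by move/t_inj.
    by exists 1; [case: qprime | exists 1; rewrite !scale1r].
  exact: prime_saturation_quotient_tf.
have ann_diff : ann M (u - r * t).
  by apply: (prime_module_ann Mprime x0_neq0); rewrite scalerBl E scalerA subrr.
apply: uq; rewrite -(subrK (r * t) u).
by case: qprime => [[_ qD qM] _ _]; apply: qD; [apply: ann_q | apply: qM].
Qed.

End SimpleTorsionFree.

Theorem lemma1p1 (R : comNzRingType) (M : lmodType R) (F : (R -> Prop) -> Prop) :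
  noetherian_ring R -> local_ring R -> gabriel_topology F ->
  simple_F_torsion_free F M ->
  [/\ prime_module M, uniform_module M & in_Fstar F (ann M)].
Proof.
move=> _ _ HF HM; split.
- exact: (sftf_prime HM).
- exact: (sftf_uniform HF HM).
- exact: (sftf_ann_Fstar HF HM).
Qed.
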